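(* Let $G$ be a connected simple graph of order $n$ and let $M_{G_1}$ be a mixed graph whose underlying graph $G_1$ is a spanning subgraph of $G$. The following are equivalent: (a) $G$ (regarded as a mixed graph with no arcs) and $M_{G_1}$ are cospectral; (b) $\lambda_1(G)=\lambda_1(M_{G_1})$; (c) $G_1=G$, and $V(M_{G_1})$ has a partition $\bigcup_{j\in\mathbb{T}_6}V_j$ such that for each $j\in\mathbb{T}_6$ the induced mixed subgraph $M_{G_1}[V_j]$ contains only undirected edges, and every other edge of $M_{G_1}$ is an arc $\overrightarrow{uv}$ with $u\in V_j$ and $v\in V_{\bar\omega\cdot j}$ for some $j\in\mathbb{T}_6$; (d) $G$ and $M_{G_1}$ are switching equivalent.
   Context: A mixed graph $M_G$ is obtained from a finite simple graph $G$ by orienting the edges of some subset of $E(G)$ (arcs $\overrightarrow{uv}$; the others are undirected edges $\{u,v\}$). With $\omega=\frac{1+\mathbf{i}\sqrt3}{2}$, $N(M_G)$ has $(u,v)$-entry $\omega$ if $\overrightarrow{uv}$ is an arc, $\bar\omega$ if $\overrightarrow{vu}$ is an arc, $1$ for an undirected edge $\{u,v\}$, $0$ otherwise; eigenvalues of $M_G$ are those of $N(M_G)$, $\lambda_1$ denotes the largest one, and cospectral means same eigenvalue multiset. $\mathbb{T}_6=\{1,-1,\omega,\bar\omega,-\omega,-\bar\omega\}$. Given a partition $V(M_G)=\bigcup_{j\in\mathbb{T}_6}V_j$ into six possibly empty sets, an edge or arc $xy$ has type $(j,k)$ if $x\in V_j,y\in V_k$ (for arcs, directed from $x$ to $y$).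 The partition is admissible if every undirected edge has type $(j,j)$ or $(j,\omega j)$ for some $j$, and every arc has type $(j,j)$, $(j,\bar\omega j)$ or $(j,-\omega j)$ for some $j$. A three-way switching with respect to an admissible partition replaces each undirected edge of type $(j,\omega j)$ by an arc from its end in $V_j$ to its end in $V_{\omega j}$, replaces each arc of type $(j,\bar\omega j)$ by an undirected edge, and reverses each arc of type $(j,-\omega j)$. The converse of a mixed graph reverses all arcs. Two mixed graphs are switching equivalent if one is obtained from the other by a sequence of three-way switchings and taking converses. *)

From HB Require Import structures.
From mathcomp Require Import all_boot all_order all_algebra all_field.
From Stdlib Require Import Relations.
Set Implicit Arguments. Unset Strict Implicit. Unset Printing Implicit Defensive.
Import Order.TTheory GRing.Theory Num.Theory.
Local Open Scope ring_scope.

Definition omega : algC := (1 + 'i * sqrtC 3) / 2.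
Definition omegab : algC := omega^*.

Definition T6 : seq algC := [:: 1; -1; omega; omegab; - omega; - omegab].

Definition simple_graph n (g : rel 'I_n) : Prop :=
  (forall u v, g u v = g v u) /\ (forall u, g u u = false).

Definition connected_graph n (g : rel 'I_n) : Prop :=
  forall u v : 'I_n, connect g u v.

(* A mixed graph: underlying edge relation mE and arc relation mA
   (mA u v means the edge {u,v} is oriented as the arc u -> v). *)
Record mgraph (n : nat) := MGraph { mE : rel 'I_n; mA : rel 'I_n }.

Definition mgraph_wf n (M : mgraph n) : Prop :=
  simple_graph (mE M) /\
  (forall u v, mA M u v -> mE M u v) /\
  (forall u v, mA M u v -> ~~ mA M v u).

Definition undir n (M : mgraph n) (u v : 'I_n) : bool :=
  [&& mE M u v, ~~ mA M u v & ~~ mA M v u].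

Definition of_graph n (g : rel 'I_n) : mgraph n := MGraph g (fun _ _ => false).

Definition Nmat n (M : mgraph n) : 'M[algC]_n :=
  \matrix_(u, v) (if mA M u v then omega
                  else if mA M v u then omegab
                  else if mE M u v then 1 else 0).

(* cospectral: same multiset of eigenvalues, i.e. every value has the same
   (algebraic) multiplicity as a root of the characteristic polynomial *)
Definition cospectral n (A B : 'M[algC]_n) : Prop :=
  forall x : algC, mup x (char_poly A) = mup x (char_poly B).

Definition is_lambda1 n (A : 'M[algC]_n) (l : algC) : Prop :=
  eigenvalue A l /\ forall m, eigenvalue A m -> m <= l.

(* partition of the vertex set into the six (possibly empty) classes V_j,
   j in T6, encoded by the class function p : V_j = [set u | p u == j] *)
Definition T6_partition n (p : 'I_n -> algC) : Prop := forall u, p u \in T6.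

Definition admissible n (M : mgraph n) (p : 'I_n -> algC) : Prop :=
  T6_partition p /\
  (forall u v, undir M u v ->
     [|| p v == p u, p v == omega * p u | p u == omega * p v]) /\
  (forall u v, mA M u v ->
     [|| p v == p u, p v == omegab * p u | p v == - omega * p u]).

(* the arc relation after the three-way switching w.r.t. p *)
Definition switch_arcs n (M : mgraph n) (p : 'I_n -> algC) : rel 'I_n :=
  fun x y =>
    [|| undir M x y && (p y == omega * p x),
        mA M x y && (p y == p x)
      | mA M y x && (p x == - omega * p y)].

(* one elementary step: a three-way switching or taking the converse
   (stated extensionally on the edge and arc relations) *)
Definition switch_step n (M M' : mgraph n) : Prop :=
  (forall x y, mE M' x y = mE M x y) /\
  ((exists p, admissible M p /\ forall x y, mA M' x y = switch_arcs M p x y)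
   \/ (forall x y, mA M' x y = mA M y x)).

Definition switching_equivalent n (M1 M2 : mgraph n) : Prop :=
  Relation_Operators.clos_refl_trans (mgraph n) (@switch_step n) M1 M2 \/
  Relation_Operators.clos_refl_trans (mgraph n) (@switch_step n) M2 M1.

(* For an eigenvector x of N(M), the entries of N(M) are dominated in modulus by
   those of the adjacency matrix A of G, so x N(M) x^* <= |x| A |x|^* <= l |x|^2
   whenever l bounds the spectrum of A.  If lambda_1(M) = lambda_1(G) = l, every
   inequality is an equality: |x| is an eigenvector of A, hence nowhere zero since G
   is connected, G_1 = G, and the phases p of x (relative to a fixed vertex) satisfy
   N(M) = D A D^* with D = diag(p).  Propagating along the edges of G shows that p
   takes values in T_6, and reading off the entries of D A D^* gives the partition
   of (c).  That partition prescribes a three-way switching of G followed by taking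
   the converse.  Conversely, a three-way switching is a similarity by a diagonal
   unitary matrix and the converse is the transpose, so switching equivalent mixed
   graphs are cospectral, and cospectral Hermitian matrices share lambda_1. *)

From mathcomp Require Import all_boot all_order all_algebra all_field.
From mathcomp Require Import ring zify.
From Stdlib Require Import Relations.
Set Implicit Arguments.
Unset Strict Implicit.
Unset Printing Implicit Defensive.
Import Order.TTheory GRing.Theory Num.Theory.
Local Open Scope ring_scope.
Local Open Scope sesquilinear_scope.

Lemma omega_sqr : omega ^+ 2 = omega - 1.
Proof.
have sqrt3 : sqrtC (3 : algC) ^+ 2 = 3 by rewrite sqrtCK.
rewrite /omega expr_div_n sqrrD expr1n exprMn sqrCi sqrt3; by field.
Qed.

Lemma omega_notreal : omega \notin Num.real.
Proof.
apply/negP => omega_real.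
have : (2 * omega - 1) ^+ 2 = - 3.
  have -> : (2 * omega - 1) ^+ 2 = 4 * (omega ^+ 2 - omega) + 1 by ring.
  by rewrite omega_sqr; ring.
have : 2 * omega - 1 \is Num.real by rewrite rpredB ?rpred1 // rpredM // rpred_nat.
by rewrite realEsqr => /[swap] ->; rewrite oppr_ge0 lern0.
Qed.

Lemma omega_eq_real r : r \is Num.real -> (omega == r) = false.
Proof. by apply: contraTF => /eqP <-; exact: omega_notreal. Qed.

Lemma omegabE : omegab = 1 - omega.
Proof.
have sqrt3_conj : (sqrtC 3 : algC)^* = sqrtC 3.
  by apply/CrealP; rewrite ger0_real // sqrtC_ge0 ler0n.
rewrite /omegab /omega fmorph_div rmorphD rmorphM /= conjCi sqrt3_conj rmorph1.
by rewrite conjC_nat; field.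
Qed.

Lemma conj_omegab : omegab^* = omega.
Proof. exact: conjCK. Qed.

Lemma omega_expr3 : omega ^+ 3 = -1.
Proof. by rewrite exprSr omega_sqr mulrBl -expr2 omega_sqr; ring. Qed.

Lemma omega_prim_root : 6.-primitive_root omega.
Proof.
apply/andP; split => //; apply/forallP => -[[|[|[|[|[|[|//]]]]]] _] /=;
  rewrite unity_rootE ?[omega ^+ 5]exprS ?[omega ^+ 4]exprS ?omega_expr3 //=.
- by rewrite expr1 omega_eq_real ?rpred1.
- by rewrite omega_sqr subr_eq omega_eq_real // rpredD ?rpred1.
- by rewrite eqNr oner_eq0.
- by rewrite mulrN1 (eqr_oppLR omega) omega_eq_real ?rpredN ?rpred1.
- rewrite mulrN1 mulrN -expr2 omega_sqr (eqr_oppLR (omega - 1)) subr_eq addNr.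
  by rewrite omega_eq_real ?rpred0.
- by rewrite (exprM omega 3 2) omega_expr3 sqrrN expr1n !eqxx.
Qed.

Lemma eq_omega_expr i j : (omega ^+ i == omega ^+ j) = (i == j %[mod 6])%N.
Proof. exact: (eq_prim_root_expr omega_prim_root). Qed.

Lemma omegab_expr : omegab = omega ^+ 5.
Proof. by rewrite omegabE (exprD omega 3 2) omega_expr3 omega_sqr; ring. Qed.

Lemma oppr_omega : - omega = omega ^+ 4.
Proof. by rewrite (exprD omega 3 1) omega_expr3 mulN1r. Qed.

Lemma conj_omega_expr k : (omega ^+ k)^* = omega ^+ (5 * k).
Proof. by rewrite rmorphXn /= -/omegab omegab_expr -exprM. Qed.

Lemma omega_expr_mod k : omega ^+ (k %% 6) = omega ^+ k.
Proof. exact: (prim_expr_mod omega_prim_root). Qed.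

Lemma T6P z : reflect (exists k, z = omega ^+ k) (z \in T6).
Proof.
have opp_omegab : - omegab = omega ^+ 2.
  by rewrite omegab_expr -mulN1r -omega_expr3 -exprD -(omega_expr_mod (3 + 5)).
apply: (iffP idP) => [|[k ->]].
  rewrite !inE => /or4P[|||/orP[|/orP[]]] /eqP ->.
  - by exists 0%N.
  - by exists 3%N; rewrite omega_expr3.
  - by exists 1%N; rewrite expr1.
  - by exists 5%N; rewrite omegab_expr.
  - by exists 4%N; rewrite oppr_omega.
  - by exists 2%N.
rewrite -omega_expr_mod; have : (k %% 6 < 6)%N by rewrite ltn_pmod.
move: (k %% 6)%N => [|[|[|[|[|[|//]]]]]] _; rewrite !inE.
- by rewrite eqxx.
- by rewrite expr1 eqxx !orbT.
- by rewrite -opp_omegab eqxx !orbT.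
- by rewrite omega_expr3 eqxx !orbT.
- by rewrite -oppr_omega eqxx !orbT.
- by rewrite -omegab_expr eqxx !orbT.
Qed.

Lemma T6_mul z w : z \in T6 -> w \in T6 -> z * w \in T6.
Proof. by move=> /T6P[i ->] /T6P[j ->]; apply/T6P; exists (i + j)%N; rewrite exprD. Qed.

Lemma T6_conj z : z \in T6 -> z^* \in T6.
Proof. by move=> /T6P[i ->]; apply/T6P; exists (5 * i)%N; rewrite conj_omega_expr. Qed.

Lemma T6_conj_mul z : z \in T6 -> z^* * z = 1.
Proof.
move=> /T6P[i ->]; rewrite conj_omega_expr -exprD (_ : 5 * i + i = 6 * i)%N; last lia.
by rewrite exprM -(omega_expr_mod 6) expr1n.
Qed.

Lemma T6_neq0 z : z \in T6 -> z != 0.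
Proof.
by move=> /T6_conj_mul zK; apply: contra_eq_neq zK => ->; rewrite mulr0 eq_sym oner_neq0.
Qed.

Lemma T6_normr z : z \in T6 -> `|z| = 1.
Proof. by move=> /T6_conj_mul zK; apply/eqP; rewrite -sqrp_eq1 // normCK mulrC zK. Qed.

Lemma T6_mulIf z x : x \in T6 -> (z * x == x) = (z == 1).
Proof. by move=> /T6_neq0 x_neq0; rewrite -{2}[x]mul1r (inj_eq (mulIf x_neq0)). Qed.

Lemma omega_T6 : omega \in T6.
Proof. by rewrite !inE eqxx !orbT. Qed.

Lemma omegab_mul_omega : omegab * omega = 1.
Proof. exact: T6_conj_mul omega_T6. Qed.

Lemma eq_mul_omegab x y : (y == omegab * x) = (x == omega * y).
Proof.
apply/eqP/eqP => [->|->]; first by rewrite mulrA [omega * _]mulrC omegab_mul_omega mul1r.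
by rewrite mulrA omegab_mul_omega mul1r.
Qed.

Lemma omega_neq1 : omega != 1.
Proof. by rewrite omega_eq_real ?rpred1. Qed.

Lemma omegab_neq1 : omegab != 1.
Proof. by rewrite omegabE subr_eq addrC -subr_eq subrr eq_sym omega_eq_real ?rpred0. Qed.

Lemma omega_neq_omegab : omega != omegab.
Proof.
apply/negP => /eqP omega_omegab; apply: (negP omega_notreal).
have omega2 : omega * 2 = 1.
  by rewrite mulr_natr mulr2n {2}omega_omegab omegabE addrC subrK.
have -> : omega = omega * 2 / 2 by rewrite mulfK ?pnatr_eq0.
by rewrite omega2 rpredM ?rpredV ?rpred_nat ?rpred1.
Qed.

Lemma real_seq_max (R : numDomainType) (s : seq R) : s != [::] ->
  {subset s <= Num.real} -> exists2 m, m \in s & forall y, y \in s -> y <= m.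
Proof.
elim: s => [//|a [|b s] IH] _ s_real.
  by exists a => [|y]; rewrite ?mem_head // inE => /eqP ->.
have [|m ms m_max] := IH isT => [y ys|]; first by apply: s_real; rewrite inE ys orbT.
have [a_real m_real] : a \is Num.real /\ m \is Num.real.
  by split; apply: s_real; rewrite ?mem_head // inE ms orbT.
have [am|ma] := real_leP a_real m_real.
  by exists m => [|y]; rewrite inE ?ms ?orbT // => /orP[/eqP ->|/m_max].
exists a => [|y]; rewrite ?mem_head // inE => /orP[/eqP -> //|/m_max ym].
exact: le_trans ym (ltW ma).
Qed.

Definition qform n (B : 'M[algC]_n) (x : 'rV[algC]_n) : algC := (x *m B *m x^t*) 0 0.

Lemma qformE n (B : 'M[algC]_n) x :
  qform B x = \sum_u \sum_v x 0 u * B u v * (x 0 v)^*.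
Proof.
rewrite /qform !mxE exchange_big /=; apply: eq_bigr => v _.
by rewrite ?mxE mulr_suml; apply: eq_bigr => u _; rewrite ?mxE.
Qed.

Lemma qform1E n (x : 'rV[algC]_n) : qform 1%:M x = \sum_u x 0 u * (x 0 u)^*.
Proof. by rewrite /qform mulmx1 !mxE; apply: eq_bigr => u _; rewrite ?mxE. Qed.

Section HermitianSpectrum.
Variables (n : nat) (A : 'M[algC]_n).
Hypothesis A_herm : A \is hermsymmx.
Let P := spectralmx A.
Let d := spectral_diag A.
Let P_unitary : P *m P^t* = 1%:M.
Proof. exact/unitarymxP/spectral_unitarymx. Qed.

Lemma spectralmx_mulVmx : P^t* *m P = 1%:M.
Proof. by rewrite -invmx_unitary ?spectral_unitarymx // mulVmx // spectral_unit. Qed.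

Lemma spectral_decomposition : A = P^t* *m diag_mx d *m P.
Proof.
rewrite -invmx_unitary ?spectral_unitarymx //.
by apply/orthomx_spectralP; apply: hermitian_normalmx.
Qed.

Lemma spectral_diag_real i : d 0 i \is Num.real.
Proof. by have /mxOverP := hermitian_spectral_diag_real A_herm; apply. Qed.

Lemma eigenvalue_spectral_diag i : eigenvalue A (d 0 i).
Proof.
have PA : P *m A = diag_mx d *m P.
  by rewrite spectral_decomposition !mulmxA P_unitary mul1mx.
apply/eigenvalueP; exists (row i P).
  by rewrite -row_mul PA mul_diag_mx; apply/rowP => j; rewrite !mxE.
rewrite rowE mulmx_free_eq0 ?row_free_unit ?spectral_unit //.
by apply/eqP => /matrixP/(_ 0 i)/eqP; rewrite !mxE !eqxx oner_eq0.
Qed.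

Lemma spectral_diag_eigenvalue a : eigenvalue A a -> exists i, a = d 0 i.
Proof.
case/eigenvalueP => v vA v_neq0; set y := v *m P^t*.
have yd : y *m diag_mx d = a *: y.
  have := congr1 (mulmx^~ (P^t*)) vA.
  by rewrite spectral_decomposition !mulmxA -(mulmxA _ P) P_unitary mulmx1 -scalemxAl.
have : y != 0.
  apply: contraNneq v_neq0 => y0.
  by rewrite -[v]mulmx1 -spectralmx_mulVmx mulmxA -/y y0 mul0mx.
case/rV0Pn => i yi_neq0; exists i; apply: (mulfI yi_neq0).
by have /rowP/(_ i) := yd; rewrite mul_mx_diag !mxE => ->; rewrite mulrC.
Qed.

Lemma lambda1_exists : (0 < n)%N -> exists l, is_lambda1 A l.
Proof.
move=> n_gt0.
have [||m m_in m_max] := @real_seq_max _ [seq d 0 i | i <- enum 'I_n].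
- by rewrite -size_eq0 size_map size_enum_ord -lt0n.
- by move=> _ /mapP[i _ ->]; exact: spectral_diag_real.
exists m; split; first by case/mapP: m_in => i _ ->; exact: eigenvalue_spectral_diag.
by move=> a /spectral_diag_eigenvalue[i ->]; apply/m_max/map_f; rewrite mem_enum.
Qed.

Section Rayleigh.
Variables (l : algC) (x : 'rV[algC]_n).
Hypothesis l_ub : forall a, eigenvalue A a -> a <= l.
Let y := x *m P^t*.

Let rayleigh_gap :
  l * qform 1%:M x - qform A x = \sum_i (l - d 0 i) * (y 0 i * (y 0 i)^*).
Proof.
have yt : y^t* = P *m x^t* by rewrite /y trmx_mul map_mxM trmxCK.
have -> : qform 1%:M x = \sum_i y 0 i * (y 0 i)^*.
  have : y *m y^t* = x *m x^t*.
    by rewrite yt /y mulmxA -(mulmxA x) spectralmx_mulVmx mulmx1.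
  rewrite /qform mulmx1 => <-; rewrite mxE.
  by apply: eq_bigr => i _; rewrite !mxE.
have -> : qform A x = \sum_i d 0 i * (y 0 i * (y 0 i)^*).
  rewrite /qform spectral_decomposition !mulmxA -/y -mulmxA -yt mul_mx_diag mxE.
  by apply: eq_bigr => i _; rewrite !mxE mulrCA mulrA.
by rewrite mulr_sumr -sumrB; apply: eq_bigr => i _; rewrite mulrBl.
Qed.

Let rayleigh_gap_term_ge0 i : 0 <= (l - d 0 i) * (y 0 i * (y 0 i)^*).
Proof.
by rewrite mulr_ge0 ?mul_conjC_ge0 // subr_ge0 l_ub ?eigenvalue_spectral_diag.
Qed.

Lemma qform_le_eigenvalue_bound : qform A x <= l * qform 1%:M x.
Proof. by rewrite -subr_ge0 rayleigh_gap sumr_ge0. Qed.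

Lemma qform_eq_eigenvalue_bound :
  qform A x = l * qform 1%:M x -> x *m A = l *: x.
Proof.
move=> equality; have := rayleigh_gap; rewrite equality subrr.
move/esym/(psumr_eq0P (fun i _ => rayleigh_gap_term_ge0 i)) => gap0.
have yd : y *m diag_mx d = l *: y.
  apply/rowP => i; rewrite mul_mx_diag mxE [RHS]mxE.
  have /eqP := gap0 i isT; rewrite mulf_eq0 subr_eq0 mul_conjC_eq0.
  by case/orP => /eqP ->; rewrite ?mul0r ?mulr0 // mulrC.
rewrite spectral_decomposition !mulmxA -/y yd -scalemxAl -mulmxA.
by rewrite spectralmx_mulVmx mulmx1.
Qed.

End Rayleigh.

End HermitianSpectrum.

Lemma char_poly_similar (R : comUnitRingType) n (A P Q : 'M[R]_n) :
  P *m Q = 1%:M -> char_poly (P *m A *m Q) = char_poly A.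
Proof.
move=> PQ; have QP : Q *m P = 1%:M by apply/eqP; rewrite mulmx1C // PQ.
rewrite /char_poly /char_poly_mx.
have -> : 'X%:M - map_mx polyC (P *m A *m Q) =
          map_mx polyC P *m ('X%:M - map_mx polyC A) *m map_mx polyC Q.
  rewrite mulmxBr mulmxBl !map_mxM; congr (_ - _).
  by rewrite mul_mx_scalar -scalemxAl -map_mxM PQ map_mx1 scalemx1.
by rewrite !det_mulmx mulrC mulrA -det_mulmx -map_mxM QP map_mx1 det1 mul1r.
Qed.

Lemma char_poly_trmx (R : comNzRingType) n (A : 'M[R]_n) : char_poly A^T = char_poly A.
Proof.
rewrite /char_poly /char_poly_mx -det_tr; congr (\det _).
by rewrite linearB /= tr_scalar_mx map_trmx trmxK.
Qed.

Lemma Nmat_conj n (M : mgraph n) u v : mgraph_wf M -> (Nmat M u v)^* = Nmat M v u.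
Proof.
case=> [[E_sym _] [_ A_asym]]; rewrite !mxE (E_sym v u).
case uv: (mA M u v); case vu: (mA M v u) => //=.
- by have := A_asym _ _ uv; rewrite vu.
- by rewrite conjCK.
- by case: (mE M u v); rewrite ?rmorph1 ?rmorph0.
Qed.

Lemma Nmat_hermitian n (M : mgraph n) : mgraph_wf M -> Nmat M \is hermsymmx.
Proof.
move=> M_wf; apply/is_hermitianmxP; rewrite expr0 scale1r.
by apply/matrixP => u v; rewrite [RHS]mxE [in RHS]mxE Nmat_conj.
Qed.

Lemma Nmat_of_graph n (G : rel 'I_n) u v : Nmat (of_graph G) u v = (G u v)%:R.
Proof. by rewrite mxE /=; case: (G u v). Qed.

Lemma Nmat_T6 n (M : mgraph n) u v : mE M u v -> Nmat M u v \in T6.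
Proof. by move=> uv; rewrite mxE uv; do 2?case: ifP => _; rewrite !inE eqxx ?orbT. Qed.

Lemma Nmat_nonedge n (M : mgraph n) u v :
  mgraph_wf M -> ~~ mE M u v -> Nmat M u v = 0.
Proof.
case=> [[E_sym _] [A_E _]] uv; rewrite mxE (negbTE uv).
by rewrite (contraNF (@A_E u v)) // (contraNF (@A_E v u)) // E_sym.
Qed.

Lemma Nmat_expr n (M : mgraph n) u v : Nmat M u v =
  if mA M u v then omega ^+ 1 else if mA M v u then omega ^+ 5
  else if mE M u v then omega ^+ 0 else 0.
Proof. by rewrite mxE expr1 expr0 -omegab_expr. Qed.

Lemma Nmat_switch n (X Y : mgraph n) p u v : mgraph_wf X -> admissible X p ->
  (forall u v, mE Y u v = mE X u v) -> (forall u v, mA Y u v = switch_arcs X p u v) ->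
  Nmat Y u v = (p u)^* * Nmat X u v * p v.
Proof.
move=> [[E_sym _] [A_E A_asym]] [p_T6 [undir_type arc_type]] YE YA.
rewrite !Nmat_expr !YA YE.
move: (undir_type u v) (undir_type v u) (arc_type u v) (arc_type v u).
move: (A_E u v) (A_E v u) (A_asym u v).
rewrite /switch_arcs /undir (E_sym v u).
(* With p u = omega^a and p v = omega^b, [eq_omega_expr] turns every arc
   configuration into a linear congruence modulo 6. *)
case/T6P: (p_T6 u) => a ->; case/T6P: (p_T6 v) => b ->.
rewrite conj_omega_expr omegab_expr oppr_omega -!exprS -!exprD !eq_omega_expr.
case: (mE X u v); case: (mA X u v); case: (mA X v u) => //= *;
  rewrite ?mulr0 ?mul0r //; do ?case: ifP => ?;
  first [ by rewrite ?mulr0 ?mul0r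
        | (exfalso; lia)
        | (rewrite -!exprD; apply/eqP; rewrite eq_omega_expr; apply/eqP; lia) ].
Qed.

Lemma switch_wf n (X Y : mgraph n) p : mgraph_wf X -> admissible X p ->
  (forall u v, mE Y u v = mE X u v) -> (forall u v, mA Y u v = switch_arcs X p u v) ->
  mgraph_wf Y.
Proof.
move=> X_wf p_adm YE YA; have [[E_sym E_irr] [A_E _]] := X_wf.
have NY_conj u v : (Nmat Y u v)^* = Nmat Y v u.
  rewrite !(Nmat_switch _ _ X_wf p_adm YE YA) !rmorphM /= conjCK (Nmat_conj _ _ X_wf).
  by ring.
split; [split|split] => [u v|u|u v|u v]; rewrite ?YE //.
- by rewrite YA /switch_arcs /undir => /or3P[/andP[/and3P[]]|/andP[/A_E]|/andP[/A_E]];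
    rewrite // E_sym.
- move=> uv; apply/negP => vu; apply: (negP omega_notreal); apply/CrealP.
  by have := NY_conj u v; rewrite !mxE uv vu.
Qed.

Lemma char_poly_switch n (X Y : mgraph n) p : mgraph_wf X -> admissible X p ->
  (forall u v, mE Y u v = mE X u v) -> (forall u v, mA Y u v = switch_arcs X p u v) ->
  char_poly (Nmat Y) = char_poly (Nmat X).
Proof.
move=> X_wf p_adm YE YA; have [p_T6 _] := p_adm.
have -> : Nmat Y = diag_mx (\row_u (p u)^*) *m Nmat X *m diag_mx (\row_u p u).
  apply/matrixP => u v; rewrite (Nmat_switch _ _ X_wf p_adm YE YA).
  by rewrite mul_mx_diag mul_diag_mx !mxE.
apply: char_poly_similar; rewrite mulmx_diag -diag_const_mx; congr diag_mx.
by apply/rowP => u; rewrite !mxE T6_conj_mul.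
Qed.

Lemma converse_wf n (X Y : mgraph n) : mgraph_wf X ->
  (forall u v, mE Y u v = mE X u v) -> (forall u v, mA Y u v = mA X v u) ->
  mgraph_wf Y.
Proof.
move=> [[E_sym E_irr] [A_E A_asym]] YE YA.
split; [split|split] => [u v|u|u v|u v]; rewrite ?YA ?YE.
- exact: E_sym.
- exact: E_irr.
- by rewrite E_sym; apply: A_E.
- exact: A_asym.
Qed.

Lemma Nmat_converse n (X Y : mgraph n) : mgraph_wf X ->
  (forall u v, mE Y u v = mE X u v) -> (forall u v, mA Y u v = mA X v u) ->
  Nmat Y = (Nmat X)^T.
Proof.
by move=> [[E_sym _] _] YE YA; apply/matrixP => u v; rewrite !mxE !YA YE E_sym.
Qed.

Lemma switch_step_invariant n (X Y : mgraph n) : mgraph_wf X -> switch_step X Y ->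
  mgraph_wf Y /\ char_poly (Nmat Y) = char_poly (Nmat X).
Proof.
move=> X_wf [YE [[p [p_adm YA]]|YA]].
  by split; [exact: switch_wf X_wf p_adm YE YA|exact: char_poly_switch X_wf p_adm YE YA].
split; first exact: converse_wf X_wf YE YA.
by rewrite (Nmat_converse X_wf YE YA) char_poly_trmx.
Qed.

Lemma switching_reachable_invariant n (X Y : mgraph n) :
  clos_refl_trans _ (@switch_step n) X Y -> mgraph_wf X ->
  mgraph_wf Y /\ char_poly (Nmat Y) = char_poly (Nmat X).
Proof.
elim=> [{}X {}Y XY|//|{}X Z {}Y _ IH_XZ _ IH_ZY] X_wf; first exact: switch_step_invariant.
have [Z_wf XZ] := IH_XZ X_wf; have [Y_wf ZY] := IH_ZY Z_wf.
by rewrite ZY XZ.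
Qed.

Lemma of_graph_wf n (G : rel 'I_n) : simple_graph G -> mgraph_wf (of_graph G).
Proof. by []. Qed.

Lemma switching_equivalent_cospectral n (G : rel 'I_n) (M : mgraph n) :
  simple_graph G -> mgraph_wf M -> switching_equivalent (of_graph G) M ->
  cospectral (Nmat (of_graph G)) (Nmat M).
Proof.
move=> G_simple M_wf [GM|MG] x.
  by have [_ ->] := switching_reachable_invariant GM (of_graph_wf G_simple).
by have [_ ->] := switching_reachable_invariant MG M_wf.
Qed.

Lemma eigenvalue_mup (F : fieldType) n (A : 'M[F]_n) a :
  eigenvalue A a = (0 < mup a (char_poly A))%N.
Proof.
by rewrite eigenvalue_root_char mup_geq ?monic_neq0 ?char_poly_monic // expr1 dvdp_XsubCl.
Qed.

Lemma cospectral_lambda1 n (A B : 'M[algC]_n) : (0 < n)%N -> A \is hermsymmx ->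
  cospectral A B -> exists l, is_lambda1 A l /\ is_lambda1 B l.
Proof.
move=> n_gt0 A_herm AB; have [l [A_l l_max]] := lambda1_exists A_herm n_gt0.
have eigAB a : eigenvalue A a = eigenvalue B a by rewrite !eigenvalue_mup AB.
by exists l; split; split => [|a]; rewrite -?eigAB //; apply: l_max.
Qed.

Lemma Re_eq_norm_bound (s t : algC) : `|t| <= s -> 'Re t = s -> t = s.
Proof.
move=> ts Re_t; have Re_norm : 'Re t = `|t|.
  by apply: le_anti; rewrite (leif_Re_Creal t).1 Re_t.
have /ger0_real/Creal_ReP <- : 0 <= t by rewrite -(leif_Re_Creal t).2 Re_norm.
exact: Re_t.
Qed.

Section Domination.
Variables (n : nat) (A H : 'M[algC]_n) (l : algC) (x : 'rV[algC]_n).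
Hypothesis A_herm : A \is hermsymmx.
Hypothesis H_dom : forall u v, `|H u v| <= A u v.
Hypothesis l_ub : forall a, eigenvalue A a -> a <= l.
Hypothesis xH : x *m H = l *: x.

Let y := map_mx Num.norm x.
Let t u v := x 0 u * H u v * (x 0 v)^*.
Let s u v := `|x 0 u| * A u v * `|x 0 v|.
Let gap := \sum_u \sum_v (s u v - t u v).

Let gap_qform : gap = qform A y - l * qform 1%:M y.
Proof.
have -> : qform 1%:M y = qform 1%:M x.
  by rewrite !qform1E; apply: eq_bigr => u _; rewrite mxE conj_normC -expr2 normCK.
have -> : l * qform 1%:M x = qform H x by rewrite /qform mulmx1 xH -scalemxAl [RHS]mxE.
rewrite !qformE -sumrB; apply: eq_bigr => u _; rewrite -sumrB.
by apply: eq_bigr => v _; rewrite !mxE conj_normC.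
Qed.

Let s_ge0 u v : 0 <= s u v.
Proof. by rewrite !mulr_ge0 ?normr_ge0 // (le_trans (normr_ge0 _) (H_dom u v)). Qed.

Let norm_t_le u v : `|t u v| <= s u v.
Proof. by rewrite /t /s !normrM norm_conjC ler_wpM2r ?ler_wpM2l ?normr_ge0. Qed.

Let Re_gap_term_ge0 u v : 0 <= 'Re (s u v - t u v).
Proof.
rewrite raddfB /= (Creal_ReP _ (ger0_real (s_ge0 u v))) subr_ge0.
exact: le_trans (leif_Re_Creal _).1 (norm_t_le u v).
Qed.

Let gap_eq0 : gap = 0.
Proof.
have gap_le0 : gap <= 0.
  by rewrite gap_qform subr_le0 qform_le_eigenvalue_bound.
apply: le_anti; rewrite gap_le0 -(Creal_ReP _ (ler0_real gap_le0)).
rewrite raddf_sum /=; apply: sumr_ge0 => u _; rewrite raddf_sum; apply: sumr_ge0 => v _.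
exact: Re_gap_term_ge0.
Qed.

Lemma dominated_eigenvector_terms u v :
  x 0 u * H u v * (x 0 v)^* = `|x 0 u| * A u v * `|x 0 v|.
Proof.
have Re_row_ge0 w : 0 <= 'Re (\sum_v (s w v - t w v)).
  by rewrite raddf_sum; apply: sumr_ge0 => v' _; exact: Re_gap_term_ge0.
have : \sum_w 'Re (\sum_v (s w v - t w v)) = 0.
  by rewrite -raddf_sum -/gap gap_eq0 raddf0.
move/(psumr_eq0P (fun w _ => Re_row_ge0 w))/(_ u isT); rewrite raddf_sum.
move/(psumr_eq0P (fun v _ => Re_gap_term_ge0 u v))/(_ v isT)/eqP.
rewrite raddfB /= (Creal_ReP _ (ger0_real (s_ge0 u v))) subr_eq0 eq_sym => /eqP.
exact: Re_eq_norm_bound (norm_t_le u v).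
Qed.

Lemma dominated_eigenvector_abs : map_mx Num.norm x *m A = l *: map_mx Num.norm x.
Proof.
apply: qform_eq_eigenvalue_bound => //.
by apply/eqP; rewrite -subr_eq0 -gap_qform gap_eq0.
Qed.

End Domination.

Lemma phase_transfer (a b h : algC) : a != 0 -> b != 0 ->
  a * h * b^* = `|a| * `|b| -> (b / `|b|)^* = h^* * (a / `|a|)^*.
Proof.
move=> a_neq0 b_neq0 abh.
have na : `|a| != 0 by rewrite normr_eq0.
have nb : `|b| != 0 by rewrite normr_eq0.
have ac : a^* != 0 by rewrite conjC_eq0.
have bc : b^* = `|b| ^+ 2 / b by rewrite normCK [b * _]mulrC mulfK.
have -> : h = `|a| * `|b| / (a * b^*) by rewrite -abh; field; rewrite conjC_eq0 b_neq0.
rewrite !fmorph_div !rmorphM /= !conj_normC conjCK bc; field.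
by rewrite ac b_neq0 na nb.
Qed.

Lemma adjacency_eigenvector_nonvanishing n (G : rel 'I_n) l (y : 'rV[algC]_n) :
  simple_graph G -> connected_graph G -> (forall u, 0 <= y 0 u) ->
  y *m Nmat (of_graph G) = l *: y -> y != 0 -> forall u, y 0 u != 0.
Proof.
move=> [G_sym _] G_conn y_ge0 yA /rV0Pn[r yr_neq0] u.
have zero_closed : closed G [pred w | y 0 w == 0].
  suff zero_back w w' : G w w' -> y 0 w' = 0 -> y 0 w = 0.
    by move=> w w' ww' /=; apply/eqP/eqP; apply: zero_back; rewrite // G_sym.
  move=> ww' yw'0; have /rowP/(_ w') := yA; rewrite mxE [RHS]mxE yw'0 mulr0.
  have term_ge0 k : true -> 0 <= y 0 k * Nmat (of_graph G) k w'.
    by rewrite Nmat_of_graph mulr_ge0 ?ler0n.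
  by move/(psumr_eq0P term_ge0)/(_ w isT); rewrite Nmat_of_graph ww' mulr1.
by have := closed_connect zero_closed (G_conn r u); rewrite !inE (negbTE yr_neq0) => <-.
Qed.

(* With D = diag p, this says N(M) = D A(G) D^* on the edges of M. *)
Definition balanced_by n (M : mgraph n) (p : 'I_n -> algC) : Prop :=
  forall u v, mE M u v -> p v = (Nmat M u v)^* * p u.

Section SpanningSubgraph.
Variables (n : nat) (G : rel 'I_n) (M : mgraph n).
Hypotheses (G_simple : simple_graph G) (G_conn : connected_graph G).
Hypotheses (M_wf : mgraph_wf M) (M_sub : forall u v, mE M u v -> G u v).

Lemma Nmat_dominated u v : `|Nmat M u v| <= Nmat (of_graph G) u v.
Proof.
rewrite Nmat_of_graph; have [Muv|Muv] := boolP (mE M u v).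
  by rewrite T6_normr ?Nmat_T6 // M_sub.
by rewrite Nmat_nonedge // normr0 ler0n.
Qed.

Lemma T6_closed_balanced p : balanced_by M p -> (forall u v, mE M u v = G u v) ->
  closed G [pred u | p u \in T6].
Proof.
move=> p_bal ME u v Guv; change ((p u \in T6) = (p v \in T6)); apply/idP/idP => p_T6.
  by rewrite (p_bal u v) ?ME // T6_mul ?T6_conj ?Nmat_T6 ?ME.
have Gvu : G v u by case: G_simple => G_sym _; rewrite G_sym.
by rewrite (p_bal v u) ?ME // T6_mul ?T6_conj ?Nmat_T6 ?ME.
Qed.

Lemma lambda1_balanced :
  (exists l, is_lambda1 (Nmat (of_graph G)) l /\ is_lambda1 (Nmat M) l) ->
  (forall u v, mE M u v = G u v) /\ exists p, T6_partition p /\ balanced_by M p.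
Proof.
move=> [l [[_ l_max] [/eigenvalueP[x xH x_neq0] _]]].
have A_herm := Nmat_hermitian (of_graph_wf G_simple).
have terms := dominated_eigenvector_terms A_herm Nmat_dominated l_max xH.
have x_nonvanishing u : x 0 u != 0.
  have := adjacency_eigenvector_nonvanishing G_simple G_conn _
    (dominated_eigenvector_abs A_herm Nmat_dominated l_max xH) _ u.
  rewrite mxE normr_eq0; apply => [w|]; first by rewrite mxE normr_ge0.
  apply/negP => /eqP/rowP abs0; apply: (negP x_neq0); apply/eqP/rowP => w.
  by have := abs0 w; rewrite !mxE => /normr0_eq0.
have ME u v : mE M u v = G u v.
  apply/idP/idP => [/M_sub //|Guv]; apply/negPn/negP => Muv.
  have := terms u v; rewrite Nmat_nonedge // Nmat_of_graph Guv mulr1 mulr0 mul0r.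
  by move/esym/eqP; rewrite mulf_eq0 !normr_eq0 !(negbTE (x_nonvanishing _)).
split => //; case/rV0Pn: x_neq0 => r _.
pose sgn u := x 0 u / `|x 0 u|.
have p_bal : balanced_by M (fun u => (sgn u)^* * sgn r).
  move=> u v Muv; have := terms u v; rewrite Nmat_of_graph -ME Muv mulr1.
  move/(phase_transfer (x_nonvanishing u) (x_nonvanishing v)).
  by rewrite /sgn mulrA => ->.
exists (fun u => (sgn u)^* * sgn r); split => // u.
have := closed_connect (T6_closed_balanced p_bal ME) (G_conn r u).
rewrite -[r \in _]/(_ \in T6) -[u \in _]/(_ \in T6) => <-.
have sgn_r : `|sgn r| = 1.
  by rewrite normf_div normr_id divff // normr_eq0 x_nonvanishing.
by rewrite mulrC -normCK sgn_r expr1n !inE eqxx.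
Qed.

End SpanningSubgraph.

Definition T6_arc_partition n (M : mgraph n) (p : 'I_n -> algC) : Prop :=
  T6_partition p /\
  (forall u v, p u = p v -> ~~ mA M u v) /\
  (forall u v, mE M u v -> p u != p v ->
     (mA M u v && (p v == omegab * p u)) || (mA M v u && (p u == omegab * p v))).

Lemma balanced_arc_partition n (M : mgraph n) p :
  mgraph_wf M -> T6_partition p -> balanced_by M p -> T6_arc_partition M p.
Proof.
move=> [_ [A_E A_asym]] p_T6 p_bal; split=> //; split=> [u v puv|u v uv].
  apply/negP => uv; have := p_bal u v (A_E _ _ uv); rewrite mxE uv puv => /eqP.
  by rewrite eq_sym T6_mulIf // (negbTE omegab_neq1).
have := p_bal u v uv; rewrite mxE; case: (mA M u v) => /= [-> _|]; first by rewrite eqxx.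
case: (mA M v u) => /= [->|]; first by rewrite conj_omegab eq_mul_omegab eqxx.
by rewrite uv conjC1 mul1r => ->; rewrite eqxx.
Qed.

Lemma arc_partition_switching_equivalent n (G : rel 'I_n) (M : mgraph n) p :
  simple_graph G -> mgraph_wf M -> (forall u v, mE M u v = G u v) ->
  T6_arc_partition M p -> switching_equivalent (of_graph G) M.
Proof.
move=> [G_sym _] [_ [A_E A_asym]] ME [p_T6 [same_class cross]].
have p_neq0 u : p u != 0 := T6_neq0 (p_T6 u).
left; apply: (rt_trans _ _ _ (MGraph G (switch_arcs (of_graph G) p))).
  apply: rt_step; split => //; left; exists p; split => //.
  split => //; split => // u v; rewrite /undir /= !andbT -ME => Muv.
  have [->|puv] := eqVneq (p u) (p v); first by apply/or3P; constructor 1.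
  by case/orP: (cross u v Muv puv) => /andP[_];
    rewrite eq_mul_omegab => ->; rewrite !orbT.
apply: rt_step; split => //=; right => x y.
rewrite /switch_arcs /undir /= !andbT orbF G_sym -ME.
apply/idP/andP => [xy|[Mxy pxy]].
  have pxy : p x != p y by apply/eqP => /same_class; rewrite xy.
  split; first exact: A_E.
  case/orP: (cross x y (A_E _ _ xy) pxy) => /andP[]; first by rewrite eq_mul_omegab.
  by rewrite (negbTE (A_asym _ _ xy)).
have pxy' : p x != p y by rewrite (eqP pxy) T6_mulIf // omega_neq1.
case/orP: (cross x y Mxy pxy') => /andP[] // _.
by rewrite (eqP pxy) (inj_eq (mulIf (p_neq0 y))) (negbTE omega_neq_omegab).
Qed.

Theorem theorem4p3 (n : nat) (G : rel 'I_n) (M : mgraph n) :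
  (0 < n)%N ->
  simple_graph G -> connected_graph G ->
  mgraph_wf M ->
  (forall u v, mE M u v -> G u v) ->
  [/\ (cospectral (Nmat (of_graph G)) (Nmat M) <->
       exists l, is_lambda1 (Nmat (of_graph G)) l /\ is_lambda1 (Nmat M) l),
      ((exists l, is_lambda1 (Nmat (of_graph G)) l /\ is_lambda1 (Nmat M) l) <->
       ((forall u v, mE M u v = G u v) /\
        exists p : 'I_n -> algC,
          T6_partition p /\
          (forall u v, p u = p v -> ~~ mA M u v) /\
          (forall u v, mE M u v -> p u != p v ->
             (mA M u v && (p v == omegab * p u)) ||
             (mA M v u && (p u == omegab * p v))))) &
      ((forall u v, mE M u v = G u v) /\
        (exists p : 'I_n -> algC,
          T6_partition p /\
          (forall u v, p u = p v -> ~~ mA M u v) /\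
          (forall u v, mE M u v -> p u != p v ->
             (mA M u v && (p v == omegab * p u)) ||
             (mA M v u && (p u == omegab * p v))))
       <-> switching_equivalent (of_graph G) M)].
Proof.
move=> n_gt0 G_simple G_conn M_wf M_sub.
have a_b := cospectral_lambda1 n_gt0 (Nmat_hermitian (of_graph_wf G_simple)).
have b_c (same_lambda1 : exists l,
           is_lambda1 (Nmat (of_graph G)) l /\ is_lambda1 (Nmat M) l) :
    (forall u v, mE M u v = G u v) /\ exists p, T6_arc_partition M p.
  have [ME [p [p_T6 p_bal]]] :=
    lambda1_balanced G_simple G_conn M_wf M_sub same_lambda1.
  by split=> //; exists p; exact: balanced_arc_partition.
have c_d (c : (forall u v, mE M u v = G u v) /\ exists p, T6_arc_partition M p) :
    switching_equivalent (of_graph G) M.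
  by case: c => ME [p p_part]; exact: arc_partition_switching_equivalent p_part.
have d_a := switching_equivalent_cospectral G_simple M_wf.
split; split.
- exact: a_b.
- by move/b_c/c_d/d_a.
- exact: b_c.
- by move/c_d/d_a/a_b.
- exact: c_d.
- by move/d_a/a_b/b_c.
Qed.
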